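(* The following rules are sound, i.e. for every instance, if all premisses are valid then the conclusion is valid ($\Gamma,\Delta$ arbitrary finite multisets of compound diagrams): (a) for a pure Euler diagram $d=(L,Z)$ such that every $z\in M(d)$ has some $\ell\in L$ with $\mathrm{adj}(z,\ell)\in M(d)$, and $\{c_1,\dots,c_k\}\subseteq L$ the maximal set of contours with $M(d\setminus c_i)\neq\emptyset$: $(\mathrm{red}L)$ from $d\setminus c_1,\dots,d\setminus c_k,\Gamma\Rightarrow\Delta$ infer $d,\Gamma\Rightarrow\Delta$; $(\mathrm{red}R)$ from $\Gamma\Rightarrow\Delta,d\setminus c_i$ for all $1\le i\le k$ infer $\Gamma\Rightarrow\Delta,d$; (b) for a pure Euler diagram $d=(L,Z)$ with $|M(d)|>1$ and pure Euler diagrams $d_1=(L,Z_1)$, $d_2=(L,Z_2)$ with $Z_1\cap Z_2=Z$: $(\mathrm{mzsep}L)$ from $d_1,d_2,\Gamma\Rightarrow\Delta$ infer $d,\Gamma\Rightarrow\Delta$; $(\mathrm{mzsep}R)$ from $\Gamma\Rightarrow\Delta,d_1$ and $\Gamma\Rightarrow\Delta,d_2$ infer $\Gamma\Rightarrow\Delta,d$; (c) for a pure Euler diagram $d$ with $M(d)=\{z\}$, $z=(\{n_1,\dots,n_k\},\{o_1,\dots,o_l\})$: $(\mathrm{impdec}L)$ from $d,\Gamma\Rightarrow P_{n_i}$ for all $1\le i\le k$ and $P_{o_j},\Gamma\Rightarrow\Delta$ for all $1\le j\le l$ infer $d,\Gamma\Rightarrow\Delta$; $(\mathrm{impdec}R)$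 from $P_{n_1},\dots,P_{n_k},\Gamma\Rightarrow P_{o_1},\dots,P_{o_l}$ infer $\Gamma\Rightarrow\Delta,d$.
   Context: Fix a countably infinite set $\mathcal V$ of propositional variables. A Heyting algebra $(H,\vee,\wedge,\to,0,1)$ is a bounded distributive lattice with a binary operation $\to$ such that $c\wedge a\le b\iff c\le a\to b$; $-a:=a\to0$; empty meets are $1$, empty joins $0$. A valuation is a map $v:\mathcal V\to H$. For a finite $L\subset\mathcal V$, a zone over $L$ is a pair $z=(\mathrm{in}(z),\mathrm{out}(z))$ of disjoint subsets of $L$ with union $L$; $\mathcal Z(L)$ is the set of all zones over $L$; $v(z)=\bigwedge_{c\in\mathrm{in}(z)}v(c)\wedge\bigwedge_{c\in\mathrm{out}(z)}-v(c)$ and $m_v(z)=\big(\bigwedge_{c\in\mathrm{in}(z)}v(c)\big)\to\big(\bigvee_{c\in\mathrm{out}(z)}v(c)\big)$. Unitary diagrams are of three kinds: Venn diagrams $d=(L,\mathcal Z(L),S)$, $S\subseteq\mathcal Z(L)$ shaded, $[\![d]\!]_v=\bigvee_{z\in S}v(z)$; pure Euler diagrams $d=(L,Z)$, $Z\subseteq\mathcal Z(L)$ visible zones, missing zones $M(d)=\mathcal Z(L)\setminus Z$, $[\![d]\!]_v=\bigwedge_{z\in M(d)}m_v(z)$; Euler–Venn diagrams $d=(L,Z,S)$, $S\subseteq Z\subseteq\mathcal Z(L)$, $[\![d]\!]_v=[\![(L,Z)]\!]_v\to[\![(L,\mathcal Z(L),S)]\!]_v$. Positive literal $P_c=(\{c\},\mathcal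 Z(\{c\}),\{(\{c\},\emptyset)\})$ (a Venn diagram). Compound diagrams are built from unitary ones with $\wedge,\vee,\to$, interpreted by meet, join and Heyting implication. For $c\in L$, $\mathrm{adj}(z,c)$ is the zone obtained from $z$ by moving $c$ from $\mathrm{out}(z)$ to $\mathrm{in}(z)$ or vice versa. Reduction: $z\setminus c=(\mathrm{in}(z)\setminus\{c\},\mathrm{out}(z)\setminus\{c\})$; for pure Euler $d=(L,Z)$, $d\setminus c=(L\setminus\{c\},\{z\setminus c:z\in Z\})$. A sequent $\Gamma\Rightarrow\Delta$ (finite multisets of compound diagrams) is valid iff for every Heyting algebra and valuation $v$, $\bigwedge_{D\in\Gamma}[\![D]\!]_v\le\bigvee_{E\in\Delta}[\![E]\!]_v$. *)

From HB Require Import structures.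
From mathcomp Require Import all_boot.
From mathcomp Require Import finmap.
Set Implicit Arguments. Unset Strict Implicit. Unset Printing Implicit Defensive.
Local Open Scope fset_scope.

Record heyting := Heyting {
  hcar :> Type;
  hle : hcar -> hcar -> Prop;
  hjoin : hcar -> hcar -> hcar;
  hmeet : hcar -> hcar -> hcar;
  himp : hcar -> hcar -> hcar;
  hbot : hcar;
  htop : hcar;
  hle_refl : forall a, hle a a;
  hle_trans : forall a b c, hle a b -> hle b c -> hle a c;
  hle_antisym : forall a b, hle a b -> hle b a -> a = b;
  hmeetP : forall a b c, hle c (hmeet a b) <-> (hle c a /\ hle c b);
  hjoinP : forall a b c, hle (hjoin a b) c <-> (hle a c /\ hle b c);
  hbot_least : forall a, hle hbot a;
  htop_greatest : forall a, hle a htop;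
  hdistr : forall a b c, hmeet a (hjoin b c) = hjoin (hmeet a b) (hmeet a c);
  himpP : forall a b c, hle (hmeet c a) b <-> hle c (himp a b)
}.

Definition hneg (H : heyting) (a : H) : H := himp a (hbot H).

Definition bigmeet (H : heyting) (T : Type) (s : seq T) (f : T -> H) : H :=
  foldr (fun x acc => hmeet (f x) acc) (htop H) s.
Definition bigjoin (H : heyting) (T : Type) (s : seq T) (f : T -> H) : H :=
  foldr (fun x acc => hjoin (f x) acc) (hbot H) s.

(* propositional variables (contour labels): the countably infinite set nat *)
Definition contour := nat.
Definition contours := {fset nat}.
Definition zone := ({fset nat} * {fset nat})%type.
Definition zin (z : zone) : {fset nat} := z.1.
Definition zout (z : zone) : {fset nat} := z.2.

Definition zones_over (L : contours) : {fset zone} :=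
  [fset ((A, L `\` A) : zone) | A in fpowerset L].

Definition adj (z : zone) (c : contour) : zone :=
  if c \in zin z then (zin z `\ c, c |` zout z) else (c |` zin z, zout z `\ c).

Definition zone_rem (z : zone) (c : contour) : zone := (zin z `\ c, zout z `\ c).

(* a pure Euler diagram (L, Z), Z the visible zones *)
Record euler := Euler { eL : contours; eZ : {fset zone} }.

Inductive unitary :=
  | UVenn of contours & {fset zone}                 (* (L, Z(L), S) *)
  | UEuler of euler
  | UEulerVenn of contours & {fset zone} & {fset zone}. (* (L, Z, S) *)

Inductive diagram :=
  | DUnit of unitary
  | DAnd of diagram & diagram
  | DOr of diagram & diagram
  | DImp of diagram & diagram.

Coercion DUnit : unitary >-> diagram.

Definition missing (d : euler) : {fset zone} := zones_over (eL d) `\` eZ d.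

Definition euler_rem (d : euler) (c : contour) : euler :=
  Euler (eL d `\ c) [fset zone_rem z c | z in eZ d].

Definition lit (c : contour) : diagram :=
  DUnit (UVenn [fset c] [fset (([fset c], fset0) : zone)]).

Definition pure (d : euler) : diagram := DUnit (UEuler d).

Definition wf_euler (d : euler) : bool := eZ d `<=` zones_over (eL d).

Definition wf_unitary (u : unitary) : bool :=
  match u with
  | UVenn L Sh => Sh `<=` zones_over L
  | UEuler d => wf_euler d
  | UEulerVenn L Zv Sh => (Sh `<=` Zv) && (Zv `<=` zones_over L)
  end.

Fixpoint wf_diagram (D : diagram) : bool :=
  match D with
  | DUnit u => wf_unitary u
  | DAnd D1 D2 | DOr D1 D2 | DImp D1 D2 => wf_diagram D1 && wf_diagram D2
  end.

Section Sem.
Variables (H : heyting) (v : contour -> H).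

Definition zone_val (z : zone) : H :=
  hmeet (bigmeet (enum_fset (zin z)) v)
        (bigmeet (enum_fset (zout z)) (fun c => hneg (v c))).

Definition mzone (z : zone) : H :=
  himp (bigmeet (enum_fset (zin z)) v) (bigjoin (enum_fset (zout z)) v).

Definition sem_venn (S : {fset zone}) : H := bigjoin (enum_fset S) zone_val.

Definition sem_euler (d : euler) : H := bigmeet (enum_fset (missing d)) mzone.

Definition sem_unitary (u : unitary) : H :=
  match u with
  | UVenn _ Sh => sem_venn Sh
  | UEuler d => sem_euler d
  | UEulerVenn L Zv Sh => himp (sem_euler (Euler L Zv)) (sem_venn Sh)
  end.

Fixpoint sem (D : diagram) : H :=
  match D with
  | DUnit u => sem_unitary u
  | DAnd D1 D2 => hmeet (sem D1) (sem D2)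
  | DOr D1 D2 => hjoin (sem D1) (sem D2)
  | DImp D1 D2 => himp (sem D1) (sem D2)
  end.
End Sem.

(* Gamma => Delta, with finite multisets represented as lists *)
Definition valid (Gamma Delta : seq diagram) : Prop :=
  forall (H : heyting) (v : contour -> H),
    hle (bigmeet Gamma (sem v)) (bigjoin Delta (sem v)).

Definition wf_seq (s : seq diagram) : bool := all wf_diagram s.

Definition red_contours (d : euler) : seq contour :=
  [seq c <- enum_fset (eL d) | missing (euler_rem d c) != fset0].

(* Removing a contour c only
   weakens an Euler diagram: a missing zone w of d \ c comes from the two
   missing zones of d that put c inside and outside, and
   m(c+in, out) /\ m(in, c+out) <= m(in, out) by a case split on v c.
   Conversely, when every missing zone z has a missing neighbour adj z l, the
   zone z \ l is missing in d \ l and m(z \ l) <= m(z), so d is the meet of its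
   reductions.  Separating missing zones is M(L, Z1 & Z2) = M(L, Z1) | M(L, Z2),
   and a diagram with the single missing zone z means /\ in(z) -> \/ out(z).
   On the right of a sequent, several premisses combine because join
   distributes over finite meets. *)

From mathcomp Require Import all_boot.
From mathcomp Require Import finmap.
Set Implicit Arguments. Unset Strict Implicit. Unset Printing Implicit Defensive.
Local Open Scope fset_scope.

Section HeytingTheory.
Variable H : heyting.
Implicit Types a b c x : H.

Lemma hleIl a b : hle (hmeet a b) a.
Proof. by have /hmeetP[] := hle_refl (hmeet a b). Qed.

Lemma hleIr a b : hle (hmeet a b) b.
Proof. by have /hmeetP[] := hle_refl (hmeet a b). Qed.

Lemma hleUl a b : hle a (hjoin a b).
Proof. by have /hjoinP[] := hle_refl (hjoin a b). Qed.

Lemma hleUr a b : hle b (hjoin a b).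
Proof. by have /hjoinP[] := hle_refl (hjoin a b). Qed.

Lemma hmeetC a b : hmeet a b = hmeet b a.
Proof. by apply: hle_antisym; apply/hmeetP; split; solve [exact: hleIl | exact: hleIr]. Qed.

Lemma hleU2 a b c x : hle a c -> hle b x -> hle (hjoin a b) (hjoin c x).
Proof.
move=> ac bx; apply/hjoinP; split.
  exact: hle_trans ac (hleUl _ _).
exact: hle_trans bx (hleUr _ _).
Qed.

Lemma hle_mp c a b : hle c a -> hle c (himp a b) -> hle c b.
Proof.
move=> ca cab; apply: hle_trans (_ : hle (hmeet (himp a b) a) b).
  by apply/hmeetP.
by apply/himpP; exact: hle_refl.
Qed.

Lemma himp_le a a' b b' : hle a' a -> hle b b' -> hle (himp a b) (himp a' b').
Proof.
move=> a'a bb'; apply/himpP; apply: hle_trans bb'.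
apply: hle_mp (hleIl _ _); exact: hle_trans (hleIr _ _) a'a.
Qed.

Lemma hle_join_cases x a b c :
  hle x (hjoin a b) -> hle (hmeet x a) c -> hle (hmeet x b) c -> hle x c.
Proof.
move=> xab xac xbc; apply: hle_mp (hle_refl x) (hle_trans xab _).
by apply/hjoinP; split; apply/himpP; rewrite hmeetC.
Qed.

Section BigOps.
Variable T : Type.
Implicit Types (s : seq T) (f : T -> H).

Lemma bigmeet_cat s1 s2 f c :
  hle c (bigmeet (s1 ++ s2) f) <-> hle c (bigmeet s1 f) /\ hle c (bigmeet s2 f).
Proof.
elim: s1 => [|i s IH] /=; first by split=> [|[]//]; split=> //; exact: htop_greatest.
by rewrite !hmeetP IH; tauto.
Qed.

Lemma bigjoin_cat s1 s2 f c :
  hle (bigjoin (s1 ++ s2) f) c <-> hle (bigjoin s1 f) c /\ hle (bigjoin s2 f) c.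
Proof.
elim: s1 => [|i s IH] /=; first by split=> [|[]//]; split=> //; exact: hbot_least.
by rewrite !hjoinP IH; tauto.
Qed.

Lemma bigjoin_rcons s i f : bigjoin (s ++ [:: i]) f = hjoin (bigjoin s f) (f i).
Proof.
have fi : hle (f i) (bigjoin [:: i] f) by exact: hleUl.
apply: hle_antisym.
  apply/bigjoin_cat; split; first exact: hleUl.
  by apply/hjoinP; split; [exact: hleUr | exact: hbot_least].
have /bigjoin_cat[hs hi] := hle_refl (bigjoin (s ++ [:: i]) f).
by apply/hjoinP; split; last exact: hle_trans fi hi.
Qed.

Lemma bigmeet_map (U : Type) (g : U -> T) (r : seq U) f :
  bigmeet (map g r) f = bigmeet r (f \o g).
Proof. by elim: r => //= y r ->. Qed.
End BigOps.

Section BigOpsEq.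
Variable T : eqType.
Implicit Types (s : seq T) (f : T -> H).

Lemma bigmeetP s f c : hle c (bigmeet s f) <-> (forall i, i \in s -> hle c (f i)).
Proof.
elim: s => [|y s IH] /=; first by split=> // _; exact: htop_greatest.
rewrite hmeetP IH; split=> [[cy cs] i|cs].
  by rewrite inE => /predU1P[->|]; [exact: cy | exact: cs].
by split=> [|i si]; apply: cs; rewrite inE ?eqxx ?si ?orbT.
Qed.

Lemma bigjoinP s f c : hle (bigjoin s f) c <-> (forall i, i \in s -> hle (f i) c).
Proof.
elim: s => [|y s IH] /=; first by split=> // _; exact: hbot_least.
rewrite hjoinP IH; split=> [[yc sc] i|sc].
  by rewrite inE => /predU1P[->|]; [exact: yc | exact: sc].
by split=> [|i si]; apply: sc; rewrite inE ?eqxx ?si ?orbT.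
Qed.

Lemma bigmeet_le s f i : i \in s -> hle (bigmeet s f) (f i).
Proof. by move=> si; move/bigmeetP: (hle_refl (bigmeet s f)); apply. Qed.

Lemma bigjoin_ge s f i : i \in s -> hle (f i) (bigjoin s f).
Proof. by move=> si; move/bigjoinP: (hle_refl (bigjoin s f)); apply. Qed.

Lemma hle_bigjoin_cases x s f c :
  hle x (bigjoin s f) -> (forall i, i \in s -> hle (hmeet x (f i)) c) -> hle x c.
Proof.
move=> xs sc; apply: hle_mp (hle_refl x) (hle_trans xs _).
by apply/bigjoinP => i /sc; rewrite hmeetC => /himpP.
Qed.

Lemma hle_join_bigmeet c a s f :
  (forall i, i \in s -> hle c (hjoin a (f i))) -> hle c (hjoin a (bigmeet s f)).
Proof.
elim: s => [|y s IH] cs /=; first exact: hle_trans (htop_greatest c) (hleUr _ _).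
have cy : hle c (hjoin a (f y)) by apply: cs; rewrite inE eqxx.
have {IH}cs' : hle c (hjoin a (bigmeet s f)).
  by apply: IH => i si; apply: cs; rewrite inE si orbT.
apply: hle_join_cases cy _ _; first exact: hle_trans (hleIr _ _) (hleUl _ _).
apply: hle_join_cases (hle_trans (hleIl _ _) cs') _ _.
  exact: hle_trans (hleIr _ _) (hleUl _ _).
apply: hle_trans (hleUr _ _); apply/hmeetP; split; last exact: hleIr.
exact: hle_trans (hleIl _ _) (hleIr _ _).
Qed.
End BigOpsEq.

Section BigOpsFset.
Variables (K : choiceType) (f : K -> H).
Implicit Types A B : {fset K}.

Lemma bigmeet_fsetP A c :
  hle c (bigmeet (enum_fset A) f) <-> (forall k, k \in A -> hle c (f k)).
Proof. exact: bigmeetP. Qed.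

Lemma bigjoin_fsetP A c :
  hle (bigjoin (enum_fset A) f) c <-> (forall k, k \in A -> hle (f k) c).
Proof. exact: bigjoinP. Qed.

Lemma bigmeet_fset_le A k : k \in A -> hle (bigmeet (enum_fset A) f) (f k).
Proof. exact: bigmeet_le. Qed.

Lemma bigjoin_fset_ge A k : k \in A -> hle (f k) (bigjoin (enum_fset A) f).
Proof. exact: bigjoin_ge. Qed.

Lemma bigmeet_fsetU A B :
  bigmeet (enum_fset (A `|` B)) f =
  hmeet (bigmeet (enum_fset A) f) (bigmeet (enum_fset B) f).
Proof.
apply: hle_antisym.
  by apply/hmeetP; split; apply/bigmeet_fsetP => k kA;
    apply: bigmeet_fset_le; rewrite inE kA ?orbT.
apply/bigmeet_fsetP => k; rewrite inE => /orP[kA | kB].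
  exact: hle_trans (hleIl _ _) (bigmeet_fset_le kA).
exact: hle_trans (hleIr _ _) (bigmeet_fset_le kB).
Qed.
End BigOpsFset.
End HeytingTheory.

Lemma zones_overP L z : z \in zones_over L <-> zin z `<=` L /\ zout z = L `\` zin z.
Proof.
case: z => a b; rewrite /zin /zout /=; split.
  by case/imfsetP => A /=; rewrite fpowersetE => sub [-> ->].
by move=> [sub ->]; apply/imfsetP; exists a => //=; rewrite fpowersetE.
Qed.

Lemma zones_over_inj L z z' :
  z \in zones_over L -> z' \in zones_over L -> zin z = zin z' -> z = z'.
Proof.
case: z z' => a b [a' b'] /zones_overP[_ /= ->] /zones_overP[_ /= ->].
by rewrite /zin /= => ->.
Qed.

Lemma zones_over_rem L z c : z \in zones_over L -> zone_rem z c \in zones_over (L `\ c).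
Proof.
case/zones_overP => zL zE; apply/zones_overP; rewrite /zin /zout /= zE.
split; first exact: fsetSD.
by apply/fsetP => x; rewrite !inE; case: (x == c).
Qed.

Section ZoneExtension.
Variables (L : contours) (c : contour) (w : zone).
Hypotheses (cL : c \in L) (wL : w \in zones_over (L `\ c)).

Lemma notin_zones_over_rem : c \notin zin w /\ c \notin zout w.
Proof.
case/zones_overP: wL => /fsubsetP win ->; rewrite !inE eqxx andbF; split=> //.
by apply/negP => /win; rewrite !inE eqxx.
Qed.

Lemma zones_over_addin : (c |` zin w, zout w) \in zones_over L.
Proof.
case/zones_overP: wL => win wout; apply/zones_overP; rewrite wout /zin /zout /=.
split; first by rewrite fsubUset fsub1set cL (fsubset_trans win) ?fsubD1set.
by rewrite fsetDDl.
Qed.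

Lemma zones_over_addout : (zin w, c |` zout w) \in zones_over L.
Proof.
have [cin _] := notin_zones_over_rem.
case/zones_overP: wL => win wout; apply/zones_overP; rewrite wout /zin /zout /=.
split; first exact: fsubset_trans win (fsubD1set _ _).
apply/fsetP => x; rewrite !inE; case: (x =P c) => [->|//].
by rewrite cL (negbTE cin).
Qed.

Lemma zone_rem_addin : zone_rem (c |` zin w, zout w) c = w.
Proof.
have [cin cout] := notin_zones_over_rem.
by rewrite /zone_rem /zin /zout /= fsetU1K // mem_fsetD1 // -surjective_pairing.
Qed.

Lemma zone_rem_addout : zone_rem (zin w, c |` zout w) c = w.
Proof.
have [cin cout] := notin_zones_over_rem.
by rewrite /zone_rem /zin /zout /= fsetU1K // mem_fsetD1 // -surjective_pairing.
Qed.
End ZoneExtension.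

Lemma missing_of_missing_rem d c z :
  z \in zones_over (eL d) -> zone_rem z c \in missing (euler_rem d c) -> z \in missing d.
Proof.
rewrite !in_fsetD => -> /andP[zcZ _]; rewrite andbT.
by apply: contra zcZ => zZ; apply/imfsetP; exists z.
Qed.

Lemma missing_rem_split d c w : c \in eL d -> w \in missing (euler_rem d c) ->
  (c |` zin w, zout w) \in missing d /\ (zin w, c |` zout w) \in missing d.
Proof.
move=> cL wm; have wL : w \in zones_over (eL d `\ c) by case/fsetDP: wm.
split; apply: (@missing_of_missing_rem _ c).
- exact: zones_over_addin.
- by rewrite (zone_rem_addin wL).
- exact: zones_over_addout.
- by rewrite (zone_rem_addout wL).
Qed.

Lemma zone_rem_eq_adj L z z' l :
  z \in zones_over L -> z' \in zones_over L -> adj z l \in zones_over L ->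
  zone_rem z' l = zone_rem z l -> z' = z \/ z' = adj z l.
Proof.
move=> zL z'L aL [/fsetP ein _].
have ex x : x != l -> (x \in zin z') = (x \in zin z).
  by move=> xl; have := ein x; rewrite !inE xl.
suff [e | e] : zin z' = zin z \/ zin z' = zin (adj z l).
- by left; exact: zones_over_inj z'L zL e.
- by right; exact: zones_over_inj z'L aL e.
rewrite /adj; case: ifP => lz; case lz': (l \in zin z');
  [left | right | right | left]; apply/fsetP => x; rewrite /zin /= ?inE;
  by case: (x =P l) => [-> | /eqP xl]; rewrite ?lz ?lz' ?eqxx ?(negbTE xl) ?ex.
Qed.

Lemma missing_rem_adj d z l : wf_euler d -> z \in missing d -> adj z l \in missing d ->
  zone_rem z l \in missing (euler_rem d l).
Proof.
move=> /fsubsetP wf /fsetDP[zL zZ] /fsetDP[aL aZ].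
rewrite in_fsetD zones_over_rem // andbT; apply/negP => /imfsetP[z' z'Z /esym e].
by case: (zone_rem_eq_adj zL (wf _ z'Z) aL e) => ez; [move: zZ | move: aZ]; rewrite -ez z'Z.
Qed.

Section Semantics.
Variables (H : heyting) (v : contour -> H).
Local Notation vmeet A := (bigmeet (enum_fset A) v).
Local Notation vjoin A := (bigjoin (enum_fset A) v).

Lemma vmeet_sub A B : A `<=` B -> hle (vmeet B) (vmeet A).
Proof. by move=> /fsubsetP AB; apply/bigmeet_fsetP => x /AB; exact: bigmeet_fset_le. Qed.

Lemma vjoin_sub A B : A `<=` B -> hle (vjoin A) (vjoin B).
Proof. by move=> /fsubsetP AB; apply/bigjoin_fsetP => x /AB; exact: bigjoin_fset_ge. Qed.

Lemma mzone_rem_le z c : hle (mzone v (zone_rem z c)) (mzone v z).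
Proof. exact: himp_le (vmeet_sub (fsubD1set _ _)) (vjoin_sub (fsubD1set _ _)). Qed.

Lemma mzone_split c A B :
  hle (hmeet (mzone v (c |` A, B)) (mzone v (A, c |` B))) (mzone v (A, B)).
Proof.
rewrite /mzone /zin /zout /=; apply/(@himpP _ (vmeet A)).
set Y := hmeet _ (vmeet A).
have YA : hle Y (vmeet A) by exact: hleIr.
have YcB : hle Y (hjoin (vjoin B) (v c)).
  apply: hle_trans (_ : hle Y (vjoin (c |` B))) _.
    exact: hle_mp YA (hle_trans (hleIl _ _) (hleIr _ _)).
  apply/bigjoin_fsetP => x; rewrite !inE => /orP[/eqP-> | xB]; first exact: hleUr.
  exact: hle_trans (bigjoin_fset_ge _ xB) (hleUl _ _).
apply: hle_join_cases YcB (hleIr _ _) _.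
apply: hle_mp (hle_trans (hleIl _ _) (hle_trans (hleIl _ _) (hleIl _ _))).
apply/bigmeet_fsetP => x; rewrite !inE => /orP[/eqP-> | xA]; first exact: hleIr.
exact: hle_trans (hleIl _ _) (hle_trans YA (bigmeet_fset_le _ xA)).
Qed.

Lemma sem_euler_le_rem d c : c \in eL d -> hle (sem_euler v d) (sem_euler v (euler_rem d c)).
Proof.
move=> cL; apply/bigmeet_fsetP => -[a b] /(missing_rem_split cL)[m1 m2].
apply: hle_trans (mzone_split c a b); apply/hmeetP.
by split; apply: bigmeet_fset_le.
Qed.

Lemma sem_euler_red_ge d : wf_euler d ->
  (forall z, z \in missing d -> exists2 l, l \in eL d & adj z l \in missing d) ->
  hle (bigmeet (red_contours d) (fun c => sem_euler v (euler_rem d c))) (sem_euler v d).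
Proof.
move=> wf hadj; apply/bigmeet_fsetP => z zm.
have [l lL am] := hadj z zm.
have rm := missing_rem_adj wf zm am.
have lr : l \in red_contours d.
  by rewrite mem_filter lL andbT; apply: contraTneq rm => ->; rewrite in_fset0.
apply: hle_trans (bigmeet_le _ lr) _.
exact: hle_trans (bigmeet_fset_le _ rm) (mzone_rem_le z l).
Qed.

Lemma sem_euler_fsetI L Z1 Z2 :
  sem_euler v (Euler L (Z1 `&` Z2)) =
  hmeet (sem_euler v (Euler L Z1)) (sem_euler v (Euler L Z2)).
Proof. by rewrite /sem_euler /missing /= fsetDIr bigmeet_fsetU. Qed.

Lemma sem_euler_fset1 d z : missing d = [fset z] -> sem_euler v d = mzone v z.
Proof.
rewrite /sem_euler => ->; apply: hle_antisym; first exact: bigmeet_fset_le (fset11 z).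
by apply/bigmeet_fsetP => x /fset1P ->; exact: hle_refl.
Qed.

Lemma sem_lit n : sem v (lit n) = v n.
Proof.
apply: hle_antisym.
  apply/bigjoin_fsetP => y /fset1P ->; apply: hle_trans (hleIl _ _) _.
  exact: bigmeet_fset_le (fset11 n).
apply: hle_trans (bigjoin_fset_ge _ (fset11 _)); apply/hmeetP; split.
  by apply/bigmeet_fsetP => y /fset1P ->; exact: hle_refl.
exact: htop_greatest.
Qed.

Lemma bigmeet_lit s : bigmeet (map lit s) (sem v) = bigmeet s v.
Proof. by elim: s => // n s IH; congr (hmeet _ _); [exact: sem_lit | exact: IH]. Qed.

Lemma bigjoin_lit s : bigjoin (map lit s) (sem v) = bigjoin s v.
Proof. by elim: s => // n s IH; congr (hjoin _ _); [exact: sem_lit | exact: IH]. Qed.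
End Semantics.

Lemma valid_cons_le D Ds Gamma Delta :
  (forall (H : heyting) (v : contour -> H), hle (sem v D) (bigmeet Ds (sem v))) ->
  valid (Ds ++ Gamma) Delta -> valid (D :: Gamma) Delta.
Proof.
move=> DDs hv H v; apply: hle_trans (hv H v); apply/bigmeet_cat; split.
  exact: hle_trans (hleIl _ _) (DDs H v).
exact: hleIr.
Qed.

Lemma valid_rcons_le D Gamma Delta :
  (forall (H : heyting) (v : contour -> H), hle (bigmeet Gamma (sem v)) (sem v D)) ->
  valid Gamma (Delta ++ [:: D]).
Proof. by move=> GD H v; rewrite bigjoin_rcons; exact: hle_trans (GD H v) (hleUr _ _). Qed.

Lemma valid_rcons_bigmeet (T : eqType) (s : seq T) (E : T -> diagram) D Gamma Delta :
  (forall (H : heyting) (v : contour -> H), hle (bigmeet s (fun i => sem v (E i))) (sem v D)) ->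
  (forall i, i \in s -> valid Gamma (Delta ++ [:: E i])) ->
  valid Gamma (Delta ++ [:: D]).
Proof.
move=> sD hv H v; rewrite bigjoin_rcons.
apply: hle_trans (hleU2 (hle_refl _) (sD H v)).
by apply: hle_join_bigmeet => i si; rewrite -bigjoin_rcons; exact: hv.
Qed.

Lemma red_sound d Gamma Delta : wf_euler d ->
  (forall z, z \in missing d -> exists2 l, l \in eL d & adj z l \in missing d) ->
  (valid ([seq pure (euler_rem d c) | c <- red_contours d] ++ Gamma) Delta ->
   valid (pure d :: Gamma) Delta)
  /\
  ((forall c, c \in red_contours d -> valid Gamma (Delta ++ [:: pure (euler_rem d c)])) ->
   valid Gamma (Delta ++ [:: pure d])).
Proof.
move=> wf hadj; split.
  apply: valid_cons_le => H v; rewrite bigmeet_map.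
  apply/bigmeetP => c; rewrite mem_filter => /andP[_ cL]; exact: sem_euler_le_rem.
by move=> hv; apply: valid_rcons_bigmeet hv => H v; exact: sem_euler_red_ge.
Qed.

Lemma mzsep_sound L Z1 Z2 Gamma Delta :
  (valid (pure (Euler L Z1) :: pure (Euler L Z2) :: Gamma) Delta ->
   valid (pure (Euler L (Z1 `&` Z2)) :: Gamma) Delta)
  /\
  (valid Gamma (Delta ++ [:: pure (Euler L Z1)]) ->
   valid Gamma (Delta ++ [:: pure (Euler L Z2)]) ->
   valid Gamma (Delta ++ [:: pure (Euler L (Z1 `&` Z2))])).
Proof.
split.
  apply: (@valid_cons_le _ [:: pure (Euler L Z1); pure (Euler L Z2)]) => H v.
  rewrite /= sem_euler_fsetI; apply/hmeetP; split; first exact: hleIl.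
  by apply/hmeetP; split; [exact: hleIr | exact: htop_greatest].
move=> h1 h2; apply: (@valid_rcons_bigmeet _ [:: Z1; Z2] (fun Z => pure (Euler L Z))).
  move=> H v; rewrite /= sem_euler_fsetI; apply/hmeetP; split; first exact: hleIl.
  exact: hle_trans (hleIr _ _) (hleIl _ _).
by move=> Z; rewrite !inE => /orP[] /eqP ->.
Qed.

Lemma impdec_sound d z Gamma Delta : missing d = [fset z] ->
  ((forall n, n \in zin z -> valid (pure d :: Gamma) [:: lit n]) ->
   (forall o, o \in zout z -> valid (lit o :: Gamma) Delta) ->
   valid (pure d :: Gamma) Delta)
  /\
  (valid ([seq lit n | n <- enum_fset (zin z)] ++ Gamma)
         [seq lit o | o <- enum_fset (zout z)] ->
   valid Gamma (Delta ++ [:: pure d])).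
Proof.
move=> dz; split.
  move=> hin hout H v; set X := bigmeet _ (sem v).
  have Xz : hle X (mzone v z) by rewrite -(sem_euler_fset1 _ dz); exact: hleIl.
  have Xin : hle X (bigmeet (enum_fset (zin z)) v).
    apply/bigmeet_fsetP => n nz; apply: hle_trans (hin n nz H v) _.
    rewrite -[bigjoin _ _]/(hjoin (sem v (lit n)) (hbot H)) sem_lit.
    by apply/hjoinP; split; [exact: hle_refl | exact: hbot_least].
  apply: hle_bigjoin_cases (hle_mp Xin Xz) _ => o oz.
  apply: hle_trans (hout o oz H v).
  rewrite -[bigmeet _ _]/(hmeet (sem v (lit o)) (bigmeet Gamma (sem v))) sem_lit.
  by apply/hmeetP; split; [exact: hleIr | exact: hle_trans (hleIl _ _) (hleIr _ _)].
move=> h; apply: valid_rcons_le => H v; rewrite /= (sem_euler_fset1 _ dz).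
apply/himpP; have := h H v; rewrite bigjoin_lit; apply: hle_trans.
apply/bigmeet_cat; rewrite bigmeet_lit; split; [exact: hleIr | exact: hleIl].
Qed.
Theorem lemma8 :
  (* (a) redL and redR *)
  (forall (d : euler) (Gamma Delta : seq diagram),
     wf_euler d -> wf_seq Gamma -> wf_seq Delta ->
     (forall z, z \in missing d ->
        exists2 l, l \in eL d & adj z l \in missing d) ->
     (valid ([seq pure (euler_rem d c) | c <- red_contours d] ++ Gamma) Delta ->
      valid (pure d :: Gamma) Delta)
     /\
     ((forall c, c \in red_contours d ->
         valid Gamma (Delta ++ [:: pure (euler_rem d c)])) ->
      valid Gamma (Delta ++ [:: pure d])))
  /\
  (* (b) mzsepL and mzsepR *)
  (forall (L : contours) (Z Z1 Z2 : {fset zone}) (Gamma Delta : seq diagram),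
     wf_euler (Euler L Z) -> wf_euler (Euler L Z1) -> wf_euler (Euler L Z2) ->
     wf_seq Gamma -> wf_seq Delta ->
     1 < #|` missing (Euler L Z)| ->
     Z1 `&` Z2 = Z ->
     (valid (pure (Euler L Z1) :: pure (Euler L Z2) :: Gamma) Delta ->
      valid (pure (Euler L Z) :: Gamma) Delta)
     /\
     (valid Gamma (Delta ++ [:: pure (Euler L Z1)]) ->
      valid Gamma (Delta ++ [:: pure (Euler L Z2)]) ->
      valid Gamma (Delta ++ [:: pure (Euler L Z)])))
  /\
  (* (c) impdecL and impdecR *)
  (forall (d : euler) (z : zone) (Gamma Delta : seq diagram),
     wf_euler d -> wf_seq Gamma -> wf_seq Delta ->
     missing d = [fset z] ->
     ((forall n, n \in zin z -> valid (pure d :: Gamma) [:: lit n]) ->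
      (forall o, o \in zout z -> valid (lit o :: Gamma) Delta) ->
      valid (pure d :: Gamma) Delta)
     /\
     (valid ([seq lit n | n <- enum_fset (zin z)] ++ Gamma)
            [seq lit o | o <- enum_fset (zout z)] ->
      valid Gamma (Delta ++ [:: pure d]))).
Proof.
(* The well-formedness assumptions and |M(d)| > 1 restrict the calculus;
   soundness does not need them. *)
split; [|split].
- by move=> d Gamma Delta wf _ _ hadj; exact: red_sound.
- by move=> L Z Z1 Z2 Gamma Delta _ _ _ _ _ _ <-; exact: mzsep_sound.
- by move=> d z Gamma Delta _ _ _ dz; exact: impdec_sound.
Qed.
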